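(* Let $X$ be a Frobenius semiring. (1) $2=4$ in $X$; consequently any $m,n\in\mathbb{N}$ with $m,n\ge2$ and of equal parity are equal in $X$. (2) If $X$ is upper-bound, then $2=3$ in $X$; consequently any $m,n\in\mathbb{N}_{\ge2}$ are equal in $X$.
   Context: A semiring $(X,+,0,\cdot)$: $(X,+,0)$ commutative monoid, $(X,\cdot)$ semigroup, distributivity, $0$ absorbing. A Frobenius semiring is a unital commutative semiring with $(x+y)^n=x^n+y^n$ for all $x,y\in X$, $n\ge1$. A natural number $n$ is identified with $1+\dots+1$ ($n$ times) in $X$. Intrinsic order: $a\le b$ iff $a+x=b$ for some $x$; upper-bound means this preorder is antisymmetric. *)

From mathcomp Require Import all_boot all_algebra.
Set Implicit Arguments. Unset Strict Implicit. Unset Printing Implicit Defensive.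
Import GRing.Theory.
Local Open Scope ring_scope.

Definition frobenius (X : comPzSemiRingType) : Prop :=
  forall (x y : X) (n : nat), (1 <= n)%N -> (x + y) ^+ n = x ^+ n + y ^+ n.

Definition intrinsic_le (X : comPzSemiRingType) (a b : X) : Prop :=
  exists x : X, a + x = b.

Definition upper_bound (X : comPzSemiRingType) : Prop :=
  forall a b : X, intrinsic_le a b -> intrinsic_le b a -> a = b.

(* Expanding (1 + 1)^2 = 1^2 + 1^2 gives 4 = 2, so the natural numbers become
   periodic with period 2 from 2 on.  In an upper-bound semiring the chain
   2 <= 3 <= 4 = 2 collapses, giving 2 = 3 and hence period 1. *)

From mathcomp Require Import all_boot all_algebra.
Set Implicit Arguments. Unset Strict Implicit. Unset Printing Implicit Defensive.
Import GRing.Theory.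
Local Open Scope ring_scope.

Lemma frobenius_natr2_eq4 (X : comPzSemiRingType) :
  frobenius X -> (2%:R : X) = 4%:R.
Proof.
move=> hX; have := hX 1 1 2 isT.
by rewrite !expr1n -mulr2n -natrX => ->.
Qed.

Section EventuallyPeriodicNatr.

Variables (R : pzSemiRingType) (p d : nat).
Hypothesis natr_period : (p%:R : R) = (p + d)%:R.

Lemma natr_add_period k q : ((p + k + d * q)%:R : R) = (p + k)%:R.
Proof.
elim: q => [|q IHq]; first by rewrite muln0 addn0.
by rewrite mulnS -addnA (addnCA k) addnA natrD -natr_period -natrD addnA IHq.
Qed.

Lemma natr_eq_mod m n :
  (p <= m)%N -> (p <= n)%N -> m = n %[mod d] -> (m%:R : R) = n%:R.
Proof.
wlog le_mn : m n / (m <= n)%N => [hwlog hm hn emn|hm _ emn].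
  case/orP: (leq_total m n) => [le_mn | le_nm]; first exact: hwlog.
  by symmetry; apply: hwlog.
have /dvdnP [q def_q] : (d %| n - m)%N by rewrite -eqn_mod_dvd // emn.
by rewrite -(subnKC le_mn) def_q -(subnKC hm) mulnC natr_add_period.
Qed.

End EventuallyPeriodicNatr.

Lemma upper_bound_natr_between (X : comPzSemiRingType) (m k n : nat) :
  upper_bound X -> (m%:R : X) = n%:R -> (m <= k <= n)%N -> (m%:R : X) = k%:R.
Proof.
move=> ub emn /andP [le_mk le_kn]; apply: ub.
  by exists (k - m)%:R; rewrite -natrD subnKC.
by exists (n - k)%:R; rewrite -natrD subnKC.
Qed.

Theorem lemma3p3 (X : comPzSemiRingType) (hX : frobenius X) :
  ((2%:R : X) = 4%:R /\
   forall m n : nat, (2 <= m)%N -> (2 <= n)%N -> odd m = odd n ->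
     (m%:R : X) = n%:R) /\
  (upper_bound X ->
   (2%:R : X) = 3%:R /\
   forall m n : nat, (2 <= m)%N -> (2 <= n)%N -> (m%:R : X) = n%:R).
Proof.
have h24 := frobenius_natr2_eq4 hX.
split.
  split=> // m n hm hn odd_mn.
  by apply: (@natr_eq_mod X 2 2) => //; rewrite !modn2 odd_mn.
move=> ub; have h23 : (2%:R : X) = 3%:R by apply: upper_bound_natr_between h24 _.
split=> // m n hm hn.
by apply: (@natr_eq_mod X 2 1) => //; rewrite !modn1.
Qed.
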